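(* Let $A \in \mathbb{R}^{m \times r}$, let $C = \{ x \in \mathbb{R}^r \mid Ax \ge 0\}$, and let $\tilde C = \{ (x, Ax) \in \mathbb{R}^{r+m} \mid Ax \ge 0\}$. Then for every nonzero $x \in C$: $x$ is conformally non-decomposable in $C$ if and only if $(x, Ax)$ is conformally non-decomposable in $\tilde C$.
   Context: For $x \in \mathbb{R}^n$, $\operatorname{sign}(x) \in \{-,0,+\}^n$ is obtained by applying the sign function componentwise; the relations $0<-$, $0<+$ induce a componentwise partial order on $\{-,0,+\}^n$ ($-$ and $+$ incomparable). For a convex cone $K$, a nonzero $x \in K$ is conformally non-decomposable in $K$ if for all nonzero $x^1,x^2 \in K$ with $\operatorname{sign}(x^1),\operatorname{sign}(x^2) \le \operatorname{sign}(x)$, $x = x^1 + x^2$ implies $x^1 = \lambda x^2$ for some $\lambda > 0$. *)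

From HB Require Import structures.
From mathcomp Require Import all_boot all_order all_algebra.
Set Implicit Arguments. Unset Strict Implicit. Unset Printing Implicit Defensive.
Import Order.TTheory GRing.Theory Num.Theory.
Local Open Scope ring_scope.

(* componentwise sign order: sign(y) <= sign(x) with 0 < -, 0 < +,
   - and + incomparable; i.e. each sign(y_i) is 0 or equal to sign(x_i). *)
Definition sign_le (R : realDomainType) (n : nat) (y x : 'cV[R]_n) : Prop :=
  forall i : 'I_n, Num.sg (y i 0) = 0 \/ Num.sg (y i 0) = Num.sg (x i 0).

Definition conf_nondec (R : realDomainType) (n : nat)
    (K : 'cV[R]_n -> Prop) (x : 'cV[R]_n) : Prop :=
  x != 0 /\ K x /\
  forall x1 x2 : 'cV[R]_n,
    x1 != 0 -> x2 != 0 -> K x1 -> K x2 ->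
    sign_le x1 x -> sign_le x2 x -> x = x1 + x2 ->
    exists2 lambda : R, 0 < lambda & x1 = lambda *: x2.

Definition coneC (R : realDomainType) (m r : nat) (A : 'M[R]_(m, r))
    (x : 'cV[R]_r) : Prop :=
  forall i : 'I_m, 0 <= (A *m x) i 0.

Definition coneCt (R : realDomainType) (m r : nat) (A : 'M[R]_(m, r))
    (z : 'cV[R]_(r + m)) : Prop :=
  exists2 x : 'cV[R]_r, coneC A x & z = col_mx x (A *m x).

From HB Require Import structures.
From mathcomp Require Import all_boot all_order all_algebra.
Import Order.TTheory GRing.Theory Num.Theory.
Local Open Scope ring_scope.

(* Everything is transported along the linear injection x |-> (x, Ax), which
   maps C onto Ctilde.  Projecting to the first block turns a conformal
   decomposition of (x, Ax) into one of x.  Conversely, if x = x1 + x2 with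
   x1, x2 in C, then Ax1 and Ax2 are nonnegative, so their signs lie below
   those of Ax = Ax1 + Ax2 and the lifted decomposition is conformal too. *)

Lemma sign_le_col_mx (R : realDomainType) (r m : nat)
    (y x : 'cV[R]_r) (u v : 'cV[R]_m) :
  sign_le (col_mx y u) (col_mx x v) <-> sign_le y x /\ sign_le u v.
Proof.
split=> [le_yu_xv | [le_yx le_uv] j].
  split=> i; [have := le_yu_xv (lshift m i) | have := le_yu_xv (rshift r i)].
    by rewrite !col_mxEu.
  by rewrite !col_mxEd.
by rewrite -(splitK j); case: (split j) => k /=; rewrite ?col_mxEu ?col_mxEd.
Qed.

Lemma sign_le_nonneg_addr (R : realDomainType) (n : nat) (a b : 'cV[R]_n) :
  (forall i, 0 <= a i 0) -> (forall i, 0 <= b i 0) -> sign_le a (a + b).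
Proof.
move=> a_ge0 b_ge0 i; rewrite mxE.
have [a_gt0 | a_lt0 | ->] := ltrgt0P (a i 0).
- by right; rewrite (gtr0_sg a_gt0) gtr0_sg // ltr_wpDr.
- by have := a_ge0 i; rewrite leNgt a_lt0.
- by left; rewrite sgr0.
Qed.

Section GraphCone.

Variables (R : realDomainType) (m r : nat) (A : 'M[R]_(m, r)).

Definition graph (x : 'cV[R]_r) : 'cV[R]_(r + m) := col_mx x (A *m x).

Lemma graph_eq0 (x : 'cV[R]_r) : (graph x == 0) = (x == 0).
Proof.
by rewrite col_mx_eq0; case: eqP => [-> | _] //=; rewrite mulmx0 eqxx.
Qed.

Lemma graphD (x y : 'cV[R]_r) : graph (x + y) = graph x + graph y.
Proof. by rewrite /graph add_col_mx mulmxDr. Qed.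

Lemma graphZ (a : R) (x : 'cV[R]_r) : graph (a *: x) = a *: graph x.
Proof. by rewrite /graph scale_col_mx scalemxAr. Qed.

Lemma graph_inj : injective graph.
Proof. by move=> x y /eq_col_mx []. Qed.

Lemma coneCt_graph (x : 'cV[R]_r) : coneC A x -> coneCt A (graph x).
Proof. by exists x. Qed.

Lemma sign_le_graph (y z : 'cV[R]_r) : coneC A y -> coneC A z ->
  sign_le y (y + z) -> sign_le (graph y) (graph (y + z)).
Proof.
move=> Cy Cz le_y; apply/sign_le_col_mx; split=> //.
by rewrite mulmxDr; apply: sign_le_nonneg_addr.
Qed.

Lemma conf_nondec_graph (x : 'cV[R]_r) :
  conf_nondec (coneC A) x -> conf_nondec (coneCt A) (graph x).
Proof.
case=> x_neq0 [Cx nondec_x]; split; first by rewrite graph_eq0.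
split=> [|z1 z2 z1_neq0 z2_neq0 [x1 C1 z1E] [x2 C2 z2E]]; first exact: coneCt_graph.
move: z1_neq0 z2_neq0; rewrite {}z1E {}z2E -/(graph x1) -/(graph x2).
rewrite -graphD !graph_eq0 => x1_neq0 x2_neq0.
move=> /sign_le_col_mx[le1 _] /sign_le_col_mx[le2 _] /graph_inj x_eq.
have [l l_gt0 ->] := nondec_x _ _ x1_neq0 x2_neq0 C1 C2 le1 le2 x_eq.
by exists l; rewrite ?graphZ.
Qed.

Lemma conf_nondec_of_graph (x : 'cV[R]_r) : coneC A x ->
  conf_nondec (coneCt A) (graph x) -> conf_nondec (coneC A) x.
Proof.
move=> Cx [gx_neq0 [_ nondec_gx]]; split; first by rewrite -graph_eq0.
split=> // x1 x2 x1_neq0 x2_neq0 C1 C2 le1 le2 x_eq.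
have le_gx1 : sign_le (graph x1) (graph x).
  by rewrite x_eq; apply: sign_le_graph; rewrite -?x_eq.
have le_gx2 : sign_le (graph x2) (graph x).
  by rewrite x_eq addrC; apply: sign_le_graph; rewrite // addrC -x_eq.
have [l l_gt0 gx1E] : exists2 l, 0 < l & graph x1 = l *: graph x2.
  by apply: nondec_gx; rewrite ?graph_eq0 -?graphD -?x_eq //; apply: coneCt_graph.
by exists l => //; apply: graph_inj; rewrite graphZ.
Qed.

End GraphCone.

Theorem lemma2 (R : realFieldType) (m r : nat) (A : 'M[R]_(m, r)) (x : 'cV[R]_r) :
  coneC A x -> x != 0 ->
  (conf_nondec (coneC A) x <-> conf_nondec (coneCt A) (col_mx x (A *m x))).
Proof.
move=> Cx _; split; [exact: conf_nondec_graph | exact: conf_nondec_of_graph].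
Qed.
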